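(* Let $M$ be a finite monoid. (i) $|\mathsf F_M|=|\mathsf F_{M^{op}}|$, i.e. the topoi of right $M$-sets and of right $M^{op}$-sets have the same number of isomorphism classes of points. (ii) If $\mathsf p$ is the point of the topos of right $M$-sets corresponding to the filtered left $M$-set $Me$ for an idempotent $e$, then there is an isomorphism of monoids $\mathrm{End}(\mathsf p)\cong (eMe)^{op}$. (iii) There is a bijection $\mathsf F_M\cong \mathsf{Idem}_{\mathfrak I}(M)$, sending the class of $Me$ to the $\mathfrak I$-class of $e$.
   Context: Points of the topos of right $M$-sets correspond (Diaconescu) to filtered left $M$-sets $A$ (those for which $(-)\otimes_M A$ from right $M$-sets to sets preserves finite limits); $\mathsf F_M$ is the set of isomorphism classes of points. $M^{op}$ is the opposite monoid. $eMe=\{eme\mid m\in M\}$ is a monoid under multiplication with identity $e$. Green's relation $\mathfrak I$ on idempotents: $e\,\mathfrak I\, f$ iff $MeM=MfM$; $\mathsf{Idem}_{\mathfrak I}(M)$ is the set of $\mathfrak I$-classes of idempotents of $M$. *)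

From Stdlib Require Import List Relations ProofIrrelevance.
Set Implicit Arguments.
Unset Strict Implicit.

Record monoid := Monoid {
  mcar :> Type;
  mmul : mcar -> mcar -> mcar;
  mone : mcar;
  mmulA : forall x y z, mmul x (mmul y z) = mmul (mmul x y) z;
  mmul1m : forall x, mmul mone x = x;
  mmulm1 : forall x, mmul x mone = x }.

Definition finite_monoid (M : monoid) : Prop :=
  exists l : list M, forall x : M, In x l.

Definition Mop (M : monoid) : monoid :=
  @Monoid (mcar M) (fun x y => mmul y x) (mone M)
    (fun x y z => eq_sym (mmulA z y x)) (@mmulm1 M) (@mmul1m M).

Definition mon_iso (M N : monoid) : Prop :=
  exists (phi : M -> N) (psi : N -> M),
    (forall x, psi (phi x) = x) /\ (forall y, phi (psi y) = y) /\
    phi (mone M) = mone N /\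
    (forall x y, phi (mmul x y) = mmul (phi x) (phi y)).

Section MSets.
Variable M : monoid.
Local Notation "x * y" := (mmul x y).
Local Notation "1" := (mone M).

Record lmset := LMSet {
  lcar :> Type;
  lact : M -> lcar -> lcar;
  lact1 : forall a, lact 1 a = a;
  lactM : forall m n a, lact (m * n) a = lact m (lact n a) }.

Definition lhom (A B : lmset) (f : A -> B) : Prop :=
  forall m a, f (lact m a) = lact m (f a).

Definition liso (A B : lmset) : Prop :=
  exists (f : A -> B) (g : B -> A),
    lhom f /\ lhom g /\ (forall a, g (f a) = a) /\ (forall b, f (g b) = b).

Record rmset := RMSet {
  rcar :> Type;
  ract : rcar -> M -> rcar;
  ract1 : forall x, ract x 1 = x;
  ractM : forall x m n, ract x (m * n) = ract (ract x m) n }.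

Record rmhom (X Y : rmset) := RMHom {
  rhfun :> X -> Y;
  rhomP : forall x m, rhfun (ract x m) = ract (rhfun x) m }.

Definition rterm : rmset :=
  @RMSet unit (fun x _ => x) (fun _ => eq_refl) (fun _ _ _ => eq_refl).

Definition rprod (X Y : rmset) : rmset.
Proof.
refine (@RMSet (X * Y)%type (fun p m => (ract (fst p) m, ract (snd p) m)) _ _).
- intros [x y]; simpl; rewrite !ract1; reflexivity.
- intros [x y] m n; simpl; rewrite !ractM; reflexivity.
Defined.

Lemma requal_act_proof (X Y : rmset) (f g : rmhom X Y) (x : X) (m : M) :
  f x = g x -> f (ract x m) = g (ract x m).
Proof. intro Hx; rewrite (rhomP f), (rhomP g), Hx; reflexivity. Qed.

Definition requal (X Y : rmset) (f g : rmhom X Y) : rmset.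
Proof.
refine (@RMSet {x : X | f x = g x}
          (fun x m => exist _ (ract (proj1_sig x) m)
                        (requal_act_proof m (proj2_sig x))) _ _).
- intros [x Hx]; simpl; apply eq_sig_hprop;
    [intros; apply proof_irrelevance | simpl; apply ract1].
- intros [x Hx] m n; simpl; apply eq_sig_hprop;
    [intros; apply proof_irrelevance | simpl; apply ractM].
Defined.

(* X (x)_M A is the quotient of X * A by the equivalence relation
   generated by (x m, a) ~ (x, m a); we work with representatives. *)
Inductive tstep (X : rmset) (A : lmset) : (X * A)%type -> (X * A)%type -> Prop :=
  | TStep : forall (x : X) (m : M) (a : A), tstep (ract x m, a) (x, lact m a).

Definition teq (X : rmset) (A : lmset) : (X * A)%type -> (X * A)%type -> Prop :=
  clos_refl_sym_trans _ (@tstep X A).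

(* A is filtered iff (-) (x)_M A : right M-sets -> sets preserves finite
   limits, i.e. preserves the terminal object, binary products and
   equalizers (the canonical comparison maps are bijections). *)
Definition filtered (A : lmset) : Prop :=
  (* 1 (x) A  ->  1  is a bijection *)
  (inhabited (lcar A) /\ forall a b : A, teq (X:=rterm) (tt, a) (tt, b)) /\
  (* (X * Y) (x) A -> (X (x) A) * (Y (x) A) is a bijection *)
  (forall X Y : rmset,
     (forall (x : X) (y : Y) (a b : A), exists (x' : X) (y' : Y) (c : A),
        teq (x', c) (x, a) /\ teq (y', c) (y, b)) /\
     (forall (x x' : X) (y y' : Y) (a a' : A),
        teq (x, a) (x', a') -> teq (y, a) (y', a') ->
        teq (X:=rprod X Y) ((x, y), a) ((x', y'), a'))) /\
  (* Eq(f,g) (x) A -> X (x) A is injective with image Eq(f (x) A, g (x) A) *)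
  (forall (X Y : rmset) (f g : rmhom X Y),
     (forall (u u' : requal f g) (a a' : A),
        teq (proj1_sig u, a) (proj1_sig u', a') ->
        teq (X:=requal f g) (u, a) (u', a')) /\
     (forall (x : X) (a : A), teq (f x, a) (g x, a) ->
        exists (u : requal f g) (a' : A), teq (proj1_sig u, a') (x, a))).

(* the filtered left M-sets (representatives of points of the topos of
   right M-sets, by Diaconescu's theorem) *)
Definition FiltM : Type := {A : lmset | filtered A}.

Definition idem (e : M) : Prop := e * e = e.

Definition Jrel (e f : M) : Prop :=
  forall x : M, (exists m n, x = m * e * n) <-> (exists m n, x = m * f * n).

Lemma Me_proof (e m : M) (x : {x : M | exists n, x = n * e}) :
  exists n, m * proj1_sig x = n * e.
Proof.
destruct x as [x [n Hn]]; exists (m * n); simpl; rewrite Hn, mmulA; reflexivity.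
Qed.

Definition Me (e : M) : lmset.
Proof.
refine (@LMSet {x : M | exists m, x = m * e}
          (fun m x => exist _ (m * proj1_sig x) (Me_proof m x)) _ _).
- intros [x Hx]; apply eq_sig_hprop;
    [intros; apply proof_irrelevance | simpl; apply mmul1m].
- intros m n [x Hx]; apply eq_sig_hprop;
    [intros; apply proof_irrelevance | simpl; symmetry; apply mmulA].
Defined.

Lemma eMe_mul_proof (e : M) (He : idem e) (x y : {x : M | exists m, x = e * m * e}) :
  exists m, proj1_sig x * proj1_sig y = e * m * e.
Proof.
destruct x as [x [m Hm]], y as [y [n Hn]]; simpl.
exists (m * e * e * n); subst; rewrite !mmulA; reflexivity.
Qed.

Lemma eMe_one_proof (e : M) (He : idem e) : exists m, e = e * m * e.
Proof. exists 1; rewrite mmulm1; symmetry; exact He. Qed.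

Definition eMe (e : M) (He : idem e) : monoid.
Proof.
refine (@Monoid {x : M | exists m, x = e * m * e}
          (fun x y => exist _ (proj1_sig x * proj1_sig y) (eMe_mul_proof He x y))
          (exist _ e (eMe_one_proof He)) _ _ _).
- intros [x Hx] [y Hy] [z Hz]; apply eq_sig_hprop;
    [intros; apply proof_irrelevance | simpl; apply mmulA].
- intros [x [m Hm]]; apply eq_sig_hprop;
    [intros; apply proof_irrelevance | simpl].
  subst; rewrite !mmulA, He; reflexivity.
- intros [x [m Hm]]; apply eq_sig_hprop;
    [intros; apply proof_irrelevance | simpl].
  subst; rewrite <- !mmulA, He; reflexivity.
Defined.

(* the endomorphism monoid of a left M-set (composition f*g = f o g);
   via Diaconescu this is the monoid End(p) of the corresponding point *)
Lemma End_mul_proof (A : lmset) (f g : {f : A -> A | lhom f}) :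
  lhom (fun a => proj1_sig f (proj1_sig g a)).
Proof.
destruct f as [f Hf], g as [g Hg]; intros m a; simpl; rewrite Hg, Hf; reflexivity.
Qed.

Lemma End_one_proof (A : lmset) : lhom (fun a : A => a).
Proof. intros m a; reflexivity. Qed.

Definition End_lmset (A : lmset) : monoid.
Proof.
refine (@Monoid {f : A -> A | lhom f}
          (fun f g => exist _ (fun a => proj1_sig f (proj1_sig g a)) (End_mul_proof f g))
          (exist _ (fun a => a) (@End_one_proof A)) _ _ _).
- intros [f Hf] [g Hg] [h Hh]; apply eq_sig_hprop;
    [intros; apply proof_irrelevance | reflexivity].
- intros [f Hf]; apply eq_sig_hprop;
    [intros; apply proof_irrelevance | reflexivity].
- intros [f Hf]; apply eq_sig_hprop;
    [intros; apply proof_irrelevance | reflexivity].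
Defined.

End MSets.

Arguments FiltM : clear implicits.

(* By Diaconescu's theorem, points correspond to filtered left M-sets.  The
   proof rests on one classification result: for M finite, every filtered
   left M-set A is isomorphic to Me for an idempotent e.  Filteredness gives
   (F2) any two elements of A come from a common one, and (F3) two elements
   of M acting equally on a are equalized by some k with a in M(ka); by
   finiteness an element c with a largest orbit generates A, and equalizing
   at once all pairs of M*M identified by c yields t with tc = c; a suitable
   power e of t is idempotent and m e |-> m c is an isomorphism Me ~ A.
   Conversely every Me is filtered, since X (x)_M Me ~ Xe.

   Morphisms Me -> Mf are right multiplications by elements of eMf.  This
   gives End(Me) ~ (eMe)^op, and Me ~ Mf iff e and f are D-related; in a
   finite monoid D = J on idempotents (a stability argument using an
   idempotent power).  As J is left-right symmetric, e |-> M^op e induces the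
   bijection between points of M and of M^op. *)

From Stdlib Require Import List Relations ProofIrrelevance Classical
  ClassicalEpsilon FunctionalExtensionality Arith Lia.
Set Implicit Arguments.
Unset Strict Implicit.

Local Infix "⋆" := mmul (at level 40, left associativity).
Ltac monoid_assoc := rewrite ?mmulA; reflexivity.

Lemma sig_ext (T : Type) (P : T -> Prop) (x y : sig P) :
  proj1_sig x = proj1_sig y -> x = y.
Proof. apply eq_sig_hprop; intros; apply proof_irrelevance. Qed.

Lemma pigeonhole_nat (T : Type) (l : list T) (Hl : forall x, In x l)
  (g : nat -> T) : exists i j, i < j <= length l /\ g i = g j.
Proof.
  apply NNPP; intro Hno.
  assert (Hnodup : NoDup (map g (seq 0 (S (length l))))).
  { apply NoDup_map_NoDup_ForallPairs; [|apply seq_NoDup].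
    intros i j Hi Hj Hij; apply in_seq in Hi, Hj.
    destruct (Nat.lt_trichotomy i j) as [Hlt|[Heq|Hlt]]; [| exact Heq |];
      exfalso; apply Hno.
    - exists i, j; split; [lia | exact Hij].
    - exists j, i; split; [lia | symmetry; exact Hij]. }
  apply NoDup_incl_length with (l' := l) in Hnodup; [|intros x _; apply Hl].
  rewrite length_map, length_seq in Hnodup; lia.
Qed.

Lemma bounded_max (Q : nat -> Prop) (N : nat) :
  Q 0 -> (forall n, Q n -> n <= N) ->
  exists n, Q n /\ forall n', Q n' -> n' <= n.
Proof.
  intros HQ0 Hbound.
  assert (Hgrow : forall k, (exists n, Q n /\ forall n', Q n' -> n' <= n) \/
                            (exists n, Q n /\ k <= n)).
  { induction k as [|k [Hmax|[n [Hn Hkn]]]].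
    - right; exists 0; split; [exact HQ0 | lia].
    - left; exact Hmax.
    - destruct (classic (exists n', Q n' /\ S k <= n')) as [Hbig|Hsmall].
      + right; exact Hbig.
      + left; exists n; split; [exact Hn|].
        intros n' Hn'; apply NNPP; intro Hlt; apply Hsmall.
        exists n'; split; [exact Hn' | lia]. }
  destruct (Hgrow (S N)) as [Hmax|[n [Hn Hle]]]; [exact Hmax|].
  apply Hbound in Hn; lia.
Qed.

Lemma liso_sym (M : monoid) (A B : lmset M) : liso A B -> liso B A.
Proof. intros [f [g [Hf [Hg [Hgf Hfg]]]]]; exists g, f; auto. Qed.

Lemma liso_trans (M : monoid) (A B C : lmset M) :
  liso A B -> liso B C -> liso A C.
Proof.
  intros [f [g [Hf [Hg [Hgf Hfg]]]]] [f' [g' [Hf' [Hg' [Hgf' Hfg']]]]].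
  exists (fun a => f' (f a)), (fun c => g (g' c)); unfold lhom in *.
  split; [|split; [|split]]; intros.
  - rewrite Hf, Hf'; reflexivity.
  - rewrite Hg', Hg; reflexivity.
  - rewrite Hgf'; apply Hgf.
  - rewrite Hfg; apply Hfg'.
Qed.

Section Powers.
Variable M : monoid.

Fixpoint mpow (t : M) (k : nat) : M :=
  match k with 0 => mone M | S k => t ⋆ mpow t k end.

Lemma mpow_add (t : M) (a b : nat) : mpow t (a + b) = mpow t a ⋆ mpow t b.
Proof.
  induction a as [|a IH]; simpl; [now rewrite mmul1m | now rewrite IH, mmulA].
Qed.

Lemma mpow_S_r (t : M) (k : nat) : mpow t (S k) = mpow t k ⋆ t.
Proof.
  replace (S k) with (k + 1) by lia.
  rewrite mpow_add; simpl; now rewrite mmulm1.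
Qed.

Lemma mpow_periodic (t : M) (i p : nat) :
  mpow t i = mpow t (i + p) ->
  forall q m, i <= m -> mpow t m = mpow t (m + q * p).
Proof.
  intros Hip.
  assert (Hstep : forall m, i <= m -> mpow t m = mpow t (m + p)).
  { intros m Hm; replace m with ((m - i) + i) by lia.
    rewrite <- Nat.add_assoc, (mpow_add t (m - i) i),
      (mpow_add t (m - i) (i + p)), Hip; reflexivity. }
  induction q as [|q IH]; intros m Hm; [now rewrite Nat.add_0_r|].
  rewrite (IH m Hm), (Hstep (m + q * p)) by lia; f_equal; lia.
Qed.

Lemma idempotent_power (HM : finite_monoid M) (t : M) :
  exists k, 1 <= k /\ idem (mpow t k).
Proof.
  destruct HM as [l Hl].
  destruct (pigeonhole_nat Hl (fun n => mpow t (S n))) as [i [j [Hij Heq]]].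
  set (p := j - i).
  assert (Hp : 1 <= p) by (unfold p; lia).
  assert (Hper : mpow t (S i) = mpow t (S i + p)).
  { unfold p; replace (S i + (j - i)) with (S j) by lia; exact Heq. }
  exists (S i * p); split; [nia|].
  unfold idem; rewrite <- mpow_add; symmetry.
  apply (mpow_periodic Hper); nia.
Qed.

Lemma mpow_fixes (A : lmset M) (t : M) (c : A) :
  lact t c = c -> forall k, lact (mpow t k) c = c.
Proof.
  intros Htc k; induction k as [|k IH]; simpl; [apply lact1|].
  rewrite lactM, IH; exact Htc.
Qed.

End Powers.

Section Tensor.
Variable M : monoid.

Lemma teq_balanced (X : rmset M) (A : lmset M) (Z : Type) (h : X -> A -> Z) :
  (forall x m a, h (ract x m) a = h x (lact m a)) ->
  forall p q, teq p q -> h (fst p) (snd p) = h (fst q) (snd q).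
Proof.
  intros Hh p q Hpq; induction Hpq as [p q Hs| | |]; [|reflexivity|congruence|congruence].
  destruct Hs; apply Hh.
Qed.

Definition RM : rmset M :=
  @RMSet M M (fun x m => x ⋆ m) (@mmulm1 M) (fun x m n => mmulA x m n).

Definition lmul_hom (m : M) : rmhom RM RM :=
  @RMHom M RM RM (fun x => m ⋆ x) (fun x p => mmulA m x p).

Lemma teq_RM (A : lmset M) (x y : M) (a b : A) :
  teq (X := RM) (x, a) (y, b) <-> lact x a = lact y b.
Proof.
  split.
  - apply (@teq_balanced RM A A (fun x a => lact x a)).
    intros z m c; apply lactM.
  - intro Hxy.
    assert (Hone : forall z (c : A), teq (X := RM) (z, c) (mone M, lact z c)).
    { intros z c; pose proof (@TStep M RM A (mone M) z c) as Hs; simpl in Hs.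
      rewrite mmul1m in Hs; apply rst_step, Hs. }
    eapply rst_trans; [apply Hone|]; rewrite Hxy; apply rst_sym, Hone.
Qed.

Section Filtered.
Variables (A : lmset M) (HA : filtered A).

(* Products are preserved: any two elements come from a common one. *)
Lemma filtered_span (a b : A) : exists m n c, lact m c = a /\ lact n c = b.
Proof.
  destruct HA as [_ [Hprod _]].
  destruct (proj1 (Hprod RM RM) (mone M) (mone M) a b)
    as [x [y [c [Hx Hy]]]].
  apply teq_RM in Hx, Hy; rewrite lact1 in Hx, Hy.
  exists x, y, c; auto.
Qed.

(* Equalizers are preserved: m a = n a is witnessed by some k with
   m k = n k and a in the orbit of k. *)
Lemma filtered_equalize (a : A) (m n : M) :
  lact m a = lact n a -> exists k d, lact k d = a /\ m ⋆ k = n ⋆ k.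
Proof.
  intro Hmn; destruct HA as [_ [_ Heq]].
  destruct (proj2 (Heq RM RM (lmul_hom m) (lmul_hom n)) (mone M) a)
    as [[u Hu] [d Hd]].
  - apply teq_RM; simpl; rewrite !mmulm1; exact Hmn.
  - simpl in *; apply teq_RM in Hd; rewrite lact1 in Hd.
    exists u, d; auto.
Qed.

End Filtered.
End Tensor.

Section Classification.
Variables (M : monoid) (HM : finite_monoid M).

Definition orbit_at_least (A : lmset M) (a : A) (n : nat) : Prop :=
  exists L : list A, length L = n /\ NoDup L /\
    forall b, In b L -> exists m, b = lact m a.

Lemma orbit_at_least_bound (l : list M) (Hl : forall x, In x l)
  (A : lmset M) (a : A) (n : nat) : orbit_at_least a n -> n <= length l.
Proof.
  intros [L [<- [Hnodup Horb]]].
  assert (Hpre : exists L', map (fun m => lact m a) L' = L).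
  { clear Hnodup; induction L as [|b L IH]; [exists nil; reflexivity|].
    destruct IH as [L' HL']; [intros; apply Horb; simpl; auto|].
    destruct (Horb b) as [x Hx]; [simpl; auto|].
    exists (x :: L'); simpl; congruence. }
  destruct Hpre as [L' <-]; rewrite length_map.
  apply NoDup_incl_length; [eapply NoDup_map_inv; exact Hnodup|].
  intros x _; apply Hl.
Qed.

(* A filtered left M-set is cyclic: an element with a largest orbit
   generates it, since otherwise (F2) would produce a larger orbit. *)
Lemma filtered_cyclic (A : lmset M) (HA : filtered A) :
  exists c : A, forall b : A, exists m, b = lact m c.
Proof.
  destruct HM as [l Hl]; destruct (proj1 (proj1 HA)) as [a0].
  destruct (@bounded_max (fun n => exists a : A, orbit_at_least a n) (length l))
    as [n [[c [L [HL [Hnodup Horb]]]] Hmax]].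
  - exists a0, nil; repeat split; [constructor | intros b []].
  - intros n [a Ha]; exact (orbit_at_least_bound Hl Ha).
  - exists c; intro b; apply NNPP; intro Hb.
    destruct (filtered_span HA c b) as [m0 [n0 [d [Hd Hdb]]]].
    enough (Hbigger : S n <= n) by lia.
    apply Hmax; exists d, (b :: L); split; [simpl; congruence | split].
    + constructor; [intro Hin; apply Hb, Horb, Hin | exact Hnodup].
    + intros b' [<-|Hb']; [exists n0; auto|].
      destruct (Horb b' Hb') as [m Hm].
      exists (m ⋆ m0); rewrite lactM, Hd; exact Hm.
Qed.

Lemma filtered_equalize_list (A : lmset M) (HA : filtered A) (c : A)
  (Hc : forall b : A, exists m, b = lact m c) (ps : list (M * M)) :
  exists t, lact t c = c /\ forall p, In p ps ->
    lact (fst p) c = lact (snd p) c -> fst p ⋆ t = snd p ⋆ t.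
Proof.
  induction ps as [|[x y] ps [t [Htc IH]]].
  - exists (mone M); split; [apply lact1 | intros _ []].
  - destruct (classic (lact x c = lact y c)) as [Hxy|Hxy].
    + assert (Hxyt : lact (x ⋆ t) c = lact (y ⋆ t) c)
        by (rewrite !lactM, Htc; exact Hxy).
      destruct (filtered_equalize HA Hxyt) as [k [d [Hkd Hk]]].
      destruct (Hc d) as [j Hj].
      exists (t ⋆ (k ⋆ j)); split.
      * rewrite !lactM, <- Hj, Hkd; exact Htc.
      * intros p [<-|Hp] Hpc; simpl; rewrite !mmulA.
        -- rewrite Hk; reflexivity.
        -- rewrite (IH p Hp Hpc); reflexivity.
    + exists t; split; [exact Htc|].
      intros p [<-|Hp] Hpc; [contradiction | auto].
Qed.

End Classification.

Section PrincipalLeftIdeals.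
Variable M : monoid.

Lemma Me_right_unit (e : M) (He : idem e) (x : Me e) :
  proj1_sig x ⋆ e = proj1_sig x.
Proof. destruct x as [x [n ->]]; simpl; rewrite <- mmulA, He; reflexivity. Qed.

Definition Me_gen (e : M) : Me e :=
  exist (fun x => exists m, x = m ⋆ e) e (ex_intro _ (mone M) (eq_sym (mmul1m e))).

Lemma lact_Me_gen (e : M) (He : idem e) (a : Me e) :
  lact (proj1_sig a) (Me_gen e) = a.
Proof. apply sig_ext; simpl; apply Me_right_unit, He. Qed.

Lemma liso_Me_of_generator (A : lmset M) (c : A) (e : M) :
  (forall b : A, exists m, b = lact m c) -> lact e c = c ->
  (forall x y, lact x c = lact y c <-> x ⋆ e = y ⋆ e) -> liso A (Me e).
Proof.
  intros Hc Hec Hrel.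
  assert (Hch : forall b : A, {m : M | b = lact m c})
    by (intro b; apply constructive_indefinite_description, Hc).
  exists (fun b => exist (fun x => exists m, x = m ⋆ e) (proj1_sig (Hch b) ⋆ e)
              (ex_intro _ (proj1_sig (Hch b)) eq_refl) : Me e).
  exists (fun x : Me e => lact (proj1_sig x) c).
  split; [|split; [|split]].
  - intros m b; apply sig_ext; simpl.
    destruct (Hch (lact m b)) as [m1 Hm1], (Hch b) as [m2 Hm2]; simpl.
    rewrite mmulA; apply Hrel; rewrite lactM, <- Hm2, <- Hm1; reflexivity.
  - intros m x; simpl; apply lactM.
  - intro b; simpl; destruct (Hch b) as [m1 Hm1]; simpl.
    rewrite lactM, Hec; auto.
  - intros [x [n ->]]; apply sig_ext; simpl.
    destruct (Hch (lact (n ⋆ e) c)) as [m1 Hm1]; simpl.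
    apply Hrel; rewrite <- Hm1, lactM, Hec; reflexivity.
Qed.

Lemma filtered_is_Me (HM : finite_monoid M) (A : lmset M) (HA : filtered A) :
  exists e : M, idem e /\ liso A (Me e).
Proof.
  destruct (filtered_cyclic HM HA) as [c Hc].
  pose proof HM as [l Hl].
  destruct (filtered_equalize_list HA Hc (list_prod l l)) as [t [Htc Ht]].
  destruct (idempotent_power HM t) as [[|k] [Hk He]]; [lia|].
  exists (mpow t (S k)); split; [exact He|].
  apply liso_Me_of_generator with (c := c); [exact Hc | apply mpow_fixes, Htc|].
  intros x y; split; intro Hxy.
  - assert (Hxt : x ⋆ t = y ⋆ t)
      by exact (Ht (x, y) ltac:(apply in_prod; auto) Hxy).
    simpl; rewrite !mmulA, Hxt; reflexivity.
  - rewrite <- (mpow_fixes Htc (S k)), <- !lactM, Hxy; reflexivity.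
Qed.

Lemma teq_Me (e : M) (He : idem e) (X : rmset M) (x x' : X) (a a' : Me e) :
  teq (x, a) (x', a') <-> ract x (proj1_sig a) = ract x' (proj1_sig a').
Proof.
  split.
  - apply (@teq_balanced M X (Me e) X (fun x a => ract x (proj1_sig a))).
    intros y m b; simpl; rewrite ractM; reflexivity.
  - intro Hxa.
    assert (Hgen : forall (y : X) (b : Me e),
               teq (X := X) (ract y (proj1_sig b), Me_gen e) (y, b)).
    { intros y b; pose proof (@TStep M X (Me e) y (proj1_sig b) (Me_gen e)) as Hs.
      rewrite (lact_Me_gen He b) in Hs; apply rst_step, Hs. }
    apply rst_trans with (ract x (proj1_sig a), Me_gen e); [apply rst_sym, Hgen|].
    rewrite Hxa; apply Hgen.
Qed.

(* Each Me with e idempotent is filtered: X (x)_M Me ~ Xe commutes with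
   finite limits. *)
Lemma Me_filtered (e : M) (He : idem e) : filtered (Me e).
Proof.
  assert (Hact : forall (X : rmset M) (x : X) (a : Me e),
             ract (ract x (proj1_sig a)) (proj1_sig (Me_gen e)) = ract x (proj1_sig a))
    by (intros; simpl; rewrite <- ractM, Me_right_unit; auto).
  split; [split|split].
  - constructor; exact (Me_gen e).
  - intros a b; apply teq_Me; auto.
  - intros X Y; split.
    + intros x y a b; exists (ract x (proj1_sig a)), (ract y (proj1_sig b)), (Me_gen e).
      split; apply teq_Me; [exact He | apply Hact | exact He | apply Hact].
    + intros x x' y y' a a' Hx Hy; apply teq_Me in Hx, Hy; auto.
      apply teq_Me; auto; simpl; congruence.
  - intros X Y f g; split.
    + intros u u' a a' Hu; apply teq_Me in Hu; auto.
      apply teq_Me; auto; apply sig_ext; exact Hu.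
    + intros x a Hfg; apply teq_Me in Hfg; auto.
      rewrite <- (rhomP f), <- (rhomP g) in Hfg.
      exists (exist _ (ract x (proj1_sig a)) Hfg : requal f g), (Me_gen e).
      apply teq_Me; [exact He | apply Hact].
Qed.

Lemma Me_hom_right_mul (e f : M) (He : idem e) (phi : Me e -> Me f)
  (Hphi : lhom phi) (x : Me e) :
  proj1_sig (phi x) = proj1_sig x ⋆ proj1_sig (phi (Me_gen e)).
Proof. rewrite <- (lact_Me_gen He x) at 1; rewrite Hphi; reflexivity. Qed.

Lemma rmul_Me_mem (f u : M) (Huf : u ⋆ f = u) (x : M) : exists m, x ⋆ u = m ⋆ f.
Proof. exists (x ⋆ u); rewrite <- mmulA, Huf; reflexivity. Qed.

Definition rmul_Me (e f u : M) (Huf : u ⋆ f = u) (x : Me e) : Me f :=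
  exist (fun y => exists m, y = m ⋆ f) (proj1_sig x ⋆ u)
    (rmul_Me_mem Huf (proj1_sig x)).

Lemma rmul_Me_hom (e f u : M) (Huf : u ⋆ f = u) : lhom (rmul_Me (e := e) Huf).
Proof. intros m x; apply sig_ext; simpl; symmetry; apply mmulA. Qed.

Lemma Jrel_iff (e f : M) :
  Jrel e f <-> (exists a b, e = a ⋆ f ⋆ b) /\ (exists c d, f = c ⋆ e ⋆ d).
Proof.
  split.
  - intro HJ; split; [apply (HJ e) | apply (HJ f)];
      exists (mone M), (mone M); rewrite mmul1m, mmulm1; reflexivity.
  - intros [[a [b Hab]] [c [d Hcd]]] x; split; intros [m [n ->]].
    + exists (m ⋆ a), (b ⋆ n); rewrite Hab; monoid_assoc.
    + exists (m ⋆ c), (d ⋆ n); rewrite Hcd; monoid_assoc.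
Qed.

(* Me ~ Mf forces e and f to be D-related, hence J-related. *)
Lemma liso_Me_Jrel (e f : M) (He : idem e) (Hf : idem f) :
  liso (Me e) (Me f) -> Jrel e f.
Proof.
  intros [phi [psi [Hphi [Hpsi [Hpsiphi Hphipsi]]]]]; apply Jrel_iff.
  set (u := proj1_sig (phi (Me_gen e))); set (v := proj1_sig (psi (Me_gen f))).
  assert (Hvu : f = v ⋆ u).
  { transitivity (proj1_sig (phi (psi (Me_gen f)))); [rewrite Hphipsi; reflexivity|].
    apply Me_hom_right_mul; auto. }
  assert (Huv : e = u ⋆ v).
  { transitivity (proj1_sig (psi (phi (Me_gen e)))); [rewrite Hpsiphi; reflexivity|].
    apply Me_hom_right_mul; auto. }
  destruct (proj2_sig (phi (Me_gen e))) as [u' Hu']; fold u in Hu'.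
  destruct (proj2_sig (psi (Me_gen f))) as [v' Hv']; fold v in Hv'.
  split; [exists u', v; rewrite Huv, Hu' | exists v', u; rewrite Hvu, Hv'];
    reflexivity.
Qed.

Lemma liso_Me_of_D (e f u v : M) (He : idem e) (Hf : idem f) :
  u ⋆ v = e -> v ⋆ u = f -> u ⋆ f = u -> v ⋆ e = v -> liso (Me e) (Me f).
Proof.
  intros Huv Hvu Huf Hve.
  exists (rmul_Me (e := e) Huf), (rmul_Me (e := f) Hve).
  split; [apply rmul_Me_hom | split; [apply rmul_Me_hom | split]];
    intro x; apply sig_ext; simpl; rewrite <- mmulA.
  - rewrite Huv; apply Me_right_unit, He.
  - rewrite Hvu; apply Me_right_unit, Hf.
Qed.

(* Stability of a finite monoid: if f = p f q with p g = p and g below f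
   (g f = g = f g), then g = f.  Taking an idempotent power P of p gives
   P f = f and P g = P, whence f = P and g = f. *)
Lemma finite_stable (HM : finite_monoid M) (f g p q : M) :
  idem f -> f = p ⋆ f ⋆ q -> p ⋆ g = p -> g ⋆ f = g -> f ⋆ g = g -> g = f.
Proof.
  intros Hf Hpq Hpg Hgf Hfg.
  assert (Hiter : forall n, f = mpow p n ⋆ f ⋆ mpow q n).
  { induction n as [|n IH]; [simpl; rewrite mmul1m, mmulm1; reflexivity|].
    rewrite (mpow_S_r q); simpl (mpow p (S n)).
    rewrite Hpq at 1; rewrite IH at 1; monoid_assoc. }
  destruct (idempotent_power HM p) as [[|k] [Hk HP]]; [lia|].
  set (P := mpow p (S k)) in *.
  assert (HPf : P ⋆ f = f).
  { rewrite (Hiter (S k)) at 2; fold P; rewrite <- HP at 2.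
    rewrite (Hiter (S k)) at 1; fold P; monoid_assoc. }
  assert (HPg : P ⋆ g = P) by (unfold P; rewrite mpow_S_r, <- mmulA, Hpg; reflexivity).
  assert (HfP : f = P) by (rewrite <- HPf, <- HPg at 1; rewrite <- mmulA, Hgf; exact HPg).
  rewrite <- Hfg, HfP at 1; rewrite HPg; symmetry; exact HfP.
Qed.

(* In a finite monoid, J-related idempotents are D-related, so their left
   ideals are isomorphic. *)
Lemma Jrel_liso_Me (HM : finite_monoid M) (e f : M) (He : idem e) (Hf : idem f) :
  Jrel e f -> liso (Me e) (Me f).
Proof.
  intro HJ; apply Jrel_iff in HJ; destruct HJ as [[a [b Hab]] [c [d Hcd]]].
  set (u := e ⋆ a ⋆ f); set (v := f ⋆ b ⋆ e).
  assert (Huv : u ⋆ v = e).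
  { transitivity (e ⋆ (a ⋆ (f ⋆ f) ⋆ b) ⋆ e); [unfold u, v; monoid_assoc|].
    unfold idem in He, Hf; rewrite Hf, <- Hab, He, He; reflexivity. }
  assert (Huf : u ⋆ f = u) by (unfold u; rewrite <- mmulA, Hf; reflexivity).
  assert (Hve : v ⋆ e = v) by (unfold v; rewrite <- mmulA, He; reflexivity).
  assert (Hfv : f ⋆ v = v) by (unfold v; rewrite !mmulA, Hf; reflexivity).
  apply (liso_Me_of_D (u := u) (v := v)); auto.
  assert (Heu : e ⋆ u = u) by (unfold u; rewrite !mmulA, He; reflexivity).
  apply (finite_stable HM (p := f ⋆ c ⋆ u) (q := v ⋆ d ⋆ f)); auto.
  - transitivity (f ⋆ (c ⋆ (u ⋆ f ⋆ v) ⋆ d) ⋆ f); [|monoid_assoc].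
    rewrite Huf, Huv, <- Hcd; unfold idem in Hf; rewrite Hf, Hf; reflexivity.
  - transitivity (f ⋆ c ⋆ (u ⋆ v) ⋆ u); [monoid_assoc|].
    rewrite Huv, <- (mmulA (f ⋆ c) e u), Heu; reflexivity.
  - rewrite <- mmulA, Huf; reflexivity.
  - rewrite mmulA, Hfv; reflexivity.
Qed.

Lemma liso_Me_iff_Jrel (HM : finite_monoid M) (e f : M) (He : idem e) (Hf : idem f) :
  liso (Me e) (Me f) <-> Jrel e f.
Proof. split; [apply liso_Me_Jrel | apply Jrel_liso_Me]; assumption. Qed.

(* End(Me) ~ (eMe)^op: an endomorphism is right multiplication by the image
   of the generator, which lies in eMe. *)
Lemma End_gen_in_eMe (e : M) (He : idem e) (F : Me e -> Me e) (HF : lhom F) :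
  exists m, proj1_sig (F (Me_gen e)) = e ⋆ m ⋆ e.
Proof.
  destruct (proj2_sig (F (Me_gen e))) as [n Hn]; exists n.
  rewrite (Me_hom_right_mul He HF (Me_gen e)); simpl; rewrite Hn; apply mmulA.
Qed.

Lemma eMe_right_unit (e s : M) (He : idem e) :
  (exists m, s = e ⋆ m ⋆ e) -> s ⋆ e = s.
Proof. intros [m ->]; rewrite <- mmulA, He; reflexivity. Qed.

Lemma eMe_left_unit (e s : M) (He : idem e) :
  (exists m, s = e ⋆ m ⋆ e) -> e ⋆ s = s.
Proof. intros [m ->]; rewrite !mmulA, He; reflexivity. Qed.

Definition End_to_eMe (e : M) (He : idem e) (F : End_lmset (Me e)) : Mop (eMe He) :=
  exist (fun x => exists m, x = e ⋆ m ⋆ e) (proj1_sig (proj1_sig F (Me_gen e)))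
    (End_gen_in_eMe He (proj2_sig F)).

Definition eMe_to_End (e : M) (He : idem e) (s : Mop (eMe He)) : End_lmset (Me e) :=
  exist (fun F : Me e -> Me e => lhom F)
    (rmul_Me (e := e) (eMe_right_unit He (proj2_sig s))) (rmul_Me_hom _).

Lemma End_Me_iso (e : M) (He : idem e) :
  mon_iso (End_lmset (Me e)) (Mop (eMe He)).
Proof.
  exists (@End_to_eMe e He), (@eMe_to_End e He).
  split; [|split; [|split]].
  - intros [F HF]; apply sig_ext; simpl; apply functional_extensionality; intro x.
    apply sig_ext; simpl; symmetry; apply Me_hom_right_mul, HF; exact He.
  - intros [s Hs]; apply sig_ext; simpl; apply eMe_left_unit; auto.
  - apply sig_ext; reflexivity.
  - intros [F HF] [G HG]; apply sig_ext; simpl; apply Me_hom_right_mul; auto.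
Qed.

End PrincipalLeftIdeals.

Lemma Jrel_op (M : monoid) (e f : M) : Jrel (M := Mop M) e f <-> Jrel e f.
Proof.
  rewrite Jrel_iff, (Jrel_iff e f); simpl.
  split; intros [[a [b Hab]] [c [d Hcd]]];
    split; [exists b, a | exists d, c | exists b, a | exists d, c];
    first [rewrite Hab at 1; monoid_assoc | rewrite Hcd at 1; monoid_assoc].
Qed.

Lemma liso_Me_op (M : monoid) (HM : finite_monoid M) (e f : M)
  (He : idem e) (Hf : idem f) :
  liso (Me e) (Me f) <-> liso (Me (M := Mop M) e) (Me (M := Mop M) f).
Proof.
  rewrite (liso_Me_iff_Jrel HM He Hf), (@liso_Me_iff_Jrel (Mop M) HM e f He Hf).
  symmetry; apply Jrel_op.
Qed.

(* Part (i): [A] |-> [M^op e_A], with A ~ M e_A, is a bijection between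
   isomorphism classes of points of M and of M^op. *)
Lemma points_op_bijection (M : monoid) (HM : finite_monoid M) :
  exists F : FiltM M -> FiltM (Mop M),
    (forall A B : FiltM M,
       liso (proj1_sig A) (proj1_sig B) <->
       liso (proj1_sig (F A)) (proj1_sig (F B))) /\
    (forall C : FiltM (Mop M), exists A : FiltM M,
       liso (proj1_sig (F A)) (proj1_sig C)).
Proof.
  set (idem_of := fun A : FiltM M => constructive_indefinite_description _
                    (filtered_is_Me HM (proj2_sig A))).
  exists (fun A => exist (fun B : lmset (Mop M) => filtered B)
             (Me (M := Mop M) (proj1_sig (idem_of A)))
             (@Me_filtered (Mop M) _ (proj1 (proj2_sig (idem_of A))))).
  split; simpl.
  - intros A B.
    destruct (proj2_sig (idem_of A)) as [HeA HA], (proj2_sig (idem_of B)) as [HeB HB].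
    rewrite <- (liso_Me_op HM HeA HeB).
    split; intro Hiso.
    + exact (liso_trans (liso_sym HA) (liso_trans Hiso HB)).
    + exact (liso_trans HA (liso_trans Hiso (liso_sym HB))).
  - intros [C HC]; destruct (@filtered_is_Me (Mop M) HM C HC) as [e [He HCe]].
    exists (exist (fun B : lmset M => filtered B) (Me (M := M) e) (@Me_filtered M e He)).
    simpl.
    destruct (proj2_sig (idem_of (exist _ (Me (M := M) e) (@Me_filtered M e He))))
      as [He' Hiso].
    apply (liso_Me_op HM He He') in Hiso.
    exact (liso_trans (liso_sym Hiso) (liso_sym HCe)).
Qed.

Theorem corollary3p15 (M : monoid) (HM : finite_monoid M) :
  (* (i) |F_M| = |F_{M^op}|: a bijection between isomorphism classes *)
  (exists F : FiltM M -> FiltM (Mop M),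
     (forall A B : FiltM M,
        liso (proj1_sig A) (proj1_sig B) <->
        liso (proj1_sig (F A)) (proj1_sig (F B))) /\
     (forall C : FiltM (Mop M), exists A : FiltM M,
        liso (proj1_sig (F A)) (proj1_sig C))) /\
  (* (ii) End(p) ~= (eMe)^op for the point p given by Me *)
  (forall (e : M) (He : idem e),
     mon_iso (End_lmset (Me e)) (Mop (eMe He))) /\
  (* (iii) F_M ~= Idem_J(M), [Me] |-> J-class of e *)
  ((forall e : M, idem e -> filtered (Me e)) /\
   (forall A : lmset M, filtered A ->
      exists e : M, idem e /\ liso A (Me e)) /\
   (forall e f : M, idem e -> idem f ->
      (liso (Me e) (Me f) <-> Jrel e f))).
Proof.
  split; [exact (points_op_bijection HM) | split].
  - exact (@End_Me_iso M).
  - split; [|split].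
    + exact (@Me_filtered M).
    + exact (filtered_is_Me HM).
    + exact (liso_Me_iff_Jrel HM).
Qed.
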